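(* Let $r_0$, $\mathcal N_0$, $\mathcal N_p$, $w$ and $L_{*,w}$ be as defined in the context. Let $\lambda\in\mathbb C$. There exists $0\ne\tilde B\in H^1(\mathbb R;\mathbb C^2)$ with $L_{*,w}\tilde B=\lambda\tilde B$ if and only if there exists $0\ne B\in H^1(\mathbb R;\mathbb C^2)$ with $$\partial_xB=\begin{bmatrix}\mathcal N_0+\mathcal N_p&\lambda\\\lambda&-\mathcal N_0-\mathcal N_p\end{bmatrix}B.$$ More precisely, $(\lambda,\tilde B)$ is such an eigenpair if and only if $(\lambda,B)$ solves the latter problem, where $B$ and $\tilde B$ are related by $\tilde B(x)=\exp\big(w(x)+\int_{-\infty}^x\mathcal N_p(y)dy\big)B(x)$.
   Context: Nonlinearity: $\mathcal N:[0,\infty)\to\mathbb R$ is smooth, $\mathcal N'(s)<0$ for $s>0$, $\mathcal N(0)=1$, $\mathcal N(1)=0$, $\lim_{s\to\infty}\mathcal N(s)\in[-\infty,0)$, and $K:=-\mathcal N'(1)>0$. $r_0$ solves $r_0'=r_0\mathcal N(r_0^2)$, $r_0(0)=\frac12$. Set $\mathcal N_0(x)=\mathcal N(r_0(x)^2)$ and $\mathcal N_p(x)=\mathcal N'(r_0(x)^2)r_0(x)^2$. $w\in C^1$ with $w=0$ for $x\le-1$ and $w(x)=Kx$ for $x\ge1$. $L_{*,w}=\sigma_1(\partial_x-w'(x))+\begin{bmatrix}0&\mathcal N_0\\-\mathcal N_0-2\mathcal N_p&0\end{bmatrix}$ with $\sigma_1=\begin{bmatrix}0&1\\1&0\end{bmatrix}$.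 This is the weight-conjugated linearization about the non-moving kink $(r_0,0)$ of $u_t=v_x+\mathcal N(u^2+v^2)v$, $v_t=u_x-\mathcal N(u^2+v^2)u$. *)

From HB Require Import structures.
From mathcomp Require Import all_boot all_order all_algebra.
From mathcomp Require Import all_classical all_reals all_analysis.
From mathcomp Require Import complex.
Set Implicit Arguments. Unset Strict Implicit. Unset Printing Implicit Defensive.
Import Order.TTheory GRing.Theory Num.Theory.
Import numFieldNormedType.Exports.
Local Open Scope classical_set_scope.
Local Open Scope ring_scope.
Local Open Scope complex_scope.

Section Defs.
Variable R : realType.
Local Notation C := R[i].
Local Notation mu := (@lebesgue_measure R).

Definition smooth (f : R -> R) : Prop :=
  forall (n : nat) (x : R), derivable (iter n (@derive1 R R) f) x 1.

Definition C1fun (f : R -> R) : Prop :=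
  (forall x : R, derivable f x 1) /\ continuous (derive1 f).

Definition nonlinearity (N : R -> R) : Prop :=
  [/\ smooth N,
      (forall s : R, 0 < s -> derive1 N s < 0),
      N 0 = 1, N 1 = 0 &
      exists l : \bar R, ((N x)%:E @[x --> +oo%R] --> l) /\ (l < 0)%E].

Definition Kconst (N : R -> R) : R := - derive1 N 1.

Definition is_r0 (N r0 : R -> R) : Prop :=
  (forall x : R, derivable r0 x 1 /\ derive1 r0 x = r0 x * N (r0 x ^+ 2)) /\
  r0 0 = 2^-1.

Definition N0 (N r0 : R -> R) (x : R) : R := N (r0 x ^+ 2).
Definition Np (N r0 : R -> R) (x : R) : R := derive1 N (r0 x ^+ 2) * r0 x ^+ 2.

Definition is_weight (N w : R -> R) : Prop :=
  [/\ C1fun w,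
      (forall x : R, x <= -1 -> w x = 0) &
      (forall x : R, 1 <= x -> w x = Kconst N * x)].

Definition L2R (h : R -> R) : Prop :=
  measurable_fun setT h /\ (\int[mu]_x ((h x) ^+ 2)%:E < +oo)%E.
Definition L2C (f : R -> C) : Prop :=
  L2R (fun x => complex.Re (f x)) /\ L2R (fun x => complex.Im (f x)).

Definition Cint (a b : R) (g : R -> C) : C :=
  (\int[mu]_(x in `[a, b]) complex.Re (g x)) +i* (\int[mu]_(x in `[a, b]) complex.Im (g x)).

(* g is the (weak) derivative of f, f being its absolutely continuous
   representative: f b - f a = int_a^b g *)
Definition weak_deriv (f g : R -> C) : Prop :=
  forall a b : R, a <= b -> f b - f a = Cint a b g.

Definition H1_with_deriv (B dB : R -> C * C) : Prop :=
  [/\ L2C (fun x => (B x).1), L2C (fun x => (B x).2),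
      L2C (fun x => (dB x).1), L2C (fun x => (dB x).2) &
      weak_deriv (fun x => (B x).1) (fun x => (dB x).1) /\
      weak_deriv (fun x => (B x).2) (fun x => (dB x).2)].

(* L_{*,w} applied to Bt, whose weak derivative is dBt:
   sigma_1 (dBt - w' Bt) + [[0, N0]; [-N0 - 2 Np, 0]] Bt *)
Definition Lstar (N r0 w : R -> R) (Bt dBt : R -> C * C) (x : R) : C * C :=
  (((dBt x).2 - (derive1 w x)%:C * (Bt x).2) + (N0 N r0 x)%:C * (Bt x).2,
   ((dBt x).1 - (derive1 w x)%:C * (Bt x).1)
     + (- N0 N r0 x - 2 * Np N r0 x)%:C * (Bt x).1).

Definition is_eigenfunction (N r0 w : R -> R) (lam : C) (Bt : R -> C * C) :=
  exists dBt : R -> C * C, H1_with_deriv Bt dBt /\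
    {ae mu, forall x, Lstar N r0 w Bt dBt x = (lam * (Bt x).1, lam * (Bt x).2)}.

Definition solves_ODE (N r0 : R -> R) (lam : C) (B : R -> C * C) :=
  exists dB : R -> C * C, H1_with_deriv B dB /\
    {ae mu, forall x, dB x =
       ((N0 N r0 x + Np N r0 x)%:C * (B x).1 + lam * (B x).2,
        lam * (B x).1 - (N0 N r0 x + Np N r0 x)%:C * (B x).2)}.

Definition transf_weight (N r0 w : R -> R) (x : R) : R :=
  expR (w x + \int[mu]_(y in `]-oo, x]) Np N r0 y).

End Defs.

(* Along the kink N0' = 2 Np N0 with Np < 0, so 0 < N0 <= 1 and -Np has the primitive
   -(ln N0)/2, which is bounded below: Np is integrable on (-oo, x] and the weight
   E = exp (w + \int_{-oo}^x Np) is well defined.  E is bounded above and below by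
   positive constants.  For x >= 0, r0^2 stays in [1/4, 1), where the mean value theorem
   gives |K + Np| <= A N0 and Np <= -c < 0; hence K x + \int_{-oo}^x Np +- k N0 is
   monotone for a suitable k, so K x + \int_{-oo}^x Np stays bounded on [0, +oo).
   As the logarithmic derivative w' + Np of E is bounded too, multiplication by E
   preserves H^1, and the product rule turns L_{*,w} (E B) = lam E B into the ODE for B:
   the w' terms cancel and Np turns N0 + 2 Np into N0 + Np.  The product rule applies
   because in both problems the weak derivative agrees a.e. with a continuous
   expression in the solution, which is therefore classically differentiable. *)

From HB Require Import structures.
From mathcomp Require Import all_boot all_order all_algebra.
From mathcomp Require Import all_classical all_reals all_analysis.
From mathcomp Require Import complex.
From mathcomp Require Import measurable_realfun.
From mathcomp Require Import ring lra.
Import Order.TTheory GRing.Theory Num.Theory.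
Import numFieldNormedType.Exports.
Set Implicit Arguments. Unset Strict Implicit. Unset Printing Implicit Defensive.
Local Open Scope classical_set_scope.
Local Open Scope ring_scope.

Section real_calculus.
Variable R : realType.
Local Notation mu := (@lebesgue_measure R).
Implicit Types (c f g h : R -> R) (a b x : R).

Lemma ae_filterS (P Q : R -> Prop) : (forall x, P x -> Q x) ->
  {ae mu, forall x, P x} -> {ae mu, forall x, Q x}.
Proof. by move=> PQ; apply: filterS PQ; exact: (ae_filter_ringOfSetsType mu). Qed.

Lemma is_derive_derive1 f x d : is_derive x 1 f d -> derive1 f x = d.
Proof. by move=> fd; rewrite derive1E derive_val. Qed.

Lemma is_derive_continuous f x d : is_derive x 1 f d -> {for x, continuous f}.
Proof. by move=> [fd _]; apply/differentiable_continuous/derivable1_diffP. Qed.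

Lemma derivable_is_derive f x : derivable f x 1 -> is_derive x 1 f (derive1 f x).
Proof. by move=> fd; rewrite derive1E; exact: derivableP. Qed.

Lemma is_derive_ge0_le f f' a b : a <= b ->
  (forall z, a <= z <= b -> is_derive z 1 f (f' z)) ->
  (forall z, a < z < b -> 0 <= f' z) -> f a <= f b.
Proof.
move=> ab fd f'ge0.
have fd_in z : z \in `]a, b[ -> a <= z <= b.
  by rewrite in_itv /= => /andP[az zb]; rewrite !ltW.
apply: (@ger0_derive1_ndecr R f a b) => //.
- by move=> z /fd_in /fd [].
- move=> z z_in; rewrite (is_derive_derive1 (fd z (fd_in z z_in))).
  by apply: f'ge0; move: z_in; rewrite in_itv.
- apply: continuous_in_subspaceT => z; rewrite inE /= in_itv /= => z_in.
  exact: is_derive_continuous (fd z z_in).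
Qed.

Lemma is_derive_le0_ge f f' a b : a <= b ->
  (forall z, a <= z <= b -> is_derive z 1 f (f' z)) ->
  (forall z, a < z < b -> f' z <= 0) -> f b <= f a.
Proof.
move=> ab fd f'le0; rewrite -lerN2.
apply: (@is_derive_ge0_le (fun z => - f z) (fun z => - f' z) _ _ ab).
  by move=> z /fd; exact: is_deriveN.
by move=> z /f'le0; rewrite oppr_ge0.
Qed.

Lemma is_derive_ge_diff f f' (lo : R) a b : a <= b ->
  (forall z, a <= z <= b -> is_derive z 1 f (f' z)) ->
  (forall z, a < z < b -> lo <= f' z) -> lo * (b - a) <= f b - f a.
Proof.
move=> ab fd lof'.
have : f a - lo * a <= f b - lo * b.
  apply: (@is_derive_ge0_le (fun z => f z - lo * z) (fun z => f' z - lo) _ _ ab).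
    move=> z /fd fzd.
    apply: is_derive_eq (is_deriveB fzd (is_deriveZ lo (is_derive_id z 1))) _.
    by rewrite /GRing.scale /= mulr1.
  by move=> z /lof'; rewrite subr_ge0.
by rewrite mulrBr; lra.
Qed.

Lemma is_derive_le_diff f f' (hi : R) a b : a <= b ->
  (forall z, a <= z <= b -> is_derive z 1 f (f' z)) ->
  (forall z, a < z < b -> f' z <= hi) -> f b - f a <= hi * (b - a).
Proof.
move=> ab fd f'hi; rewrite -lerN2 -mulNr opprB.
have -> : f a - f b = - f b - - f a by rewrite opprK addrC.
apply: (@is_derive_ge_diff (fun z => - f z) (fun z => - f' z) _ _ _ ab).
  by move=> z /fd; exact: is_deriveN.
by move=> z /f'hi; rewrite lerN2.
Qed.

Lemma continuous_bounded_itv f a b : continuous f ->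
  exists M, forall x, a <= x <= b -> `|f x| <= M.
Proof.
move=> fc; have [ab|ba] := leP a b; last first.
  by exists 0 => x /andP[ax xb]; have := le_trans ax xb; rewrite leNgt ba.
have [c _ cmax] := @EVT_max R (fun x => `|f x|) a b ab
  (continuous_subspaceT (fun x => continuous_comp (fc x) (@norm_continuous _ _ _))).
by exists `|f c| => x xab; apply: cmax; rewrite in_itv.
Qed.

Lemma is_derive_integral (f : R -> R) (a : itv_bound R) x :
  continuous f -> (forall u, mu.-integrable [set` Interval a (BRight u)] (EFin \o f)) ->
  (a < BRight x)%E ->
  is_derive x 1 (fun t => \int[mu]_(s in [set` Interval a (BRight t)]) f s) (f x).
Proof.
move=> fc fint ax.
have x_lt : x < x + 1 by rewrite ltrDl.
have [fd f'E] := @continuous_FTC1 R f a x (x + 1) x_lt (fint _) ax (fc x).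
by apply: is_derive_eq (derivableP fd) _; rewrite -derive1E f'E.
Qed.

Lemma continuous_integrable_itv f a b : continuous f ->
  mu.-integrable `[a, b] (EFin \o f).
Proof.
move=> fc; apply: continuous_compact_integrable; first exact: segment_compact.
exact: continuous_subspaceT.
Qed.

Lemma linear_ode_gt0 (y a : R -> R) :
  (forall x, is_derive x 1 y (a x * y x)) -> continuous a ->
  0 < y 0 -> forall x, 0 < y x.
Proof.
move=> yd ac y0 x.
pose T := - (`|x| + 1).
have T0 : T < 0 by rewrite /T; have := normr_ge0 x; lra.
have Tx : T < x by rewrite /T; have := ler_norm (- x); rewrite normrN; lra.
pose A t := \int[mu]_(s in `[T, t]) a s.
pose v t := y t * expR (- A t).
(* Integrating factor: [v' = (a y - y a) expR (- A) = 0] on [(T, +oo)]. *)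
have vd t : T < t -> is_derive t 1 v 0.
  move=> Tt.
  have Ad : is_derive t 1 A (a t).
    by apply: is_derive_integral => //= u; exact: continuous_integrable_itv.
  have := is_deriveM (yd t) (@is_derive1_comp _ expR (fun s => - A s) t _ _
    (is_derive_expR _) (is_deriveN Ad)).
  by move/is_derive_eq; apply; rewrite /GRing.scale /=; ring.
have v_const p q : T < p -> p <= q -> v p = v q.
  move=> Tp pq; have vd_in z : p <= z <= q -> is_derive z 1 v 0.
    by move=> /andP[pz _]; apply: vd; lra.
  apply/le_anti/andP; split.
    exact: (@is_derive_ge0_le v (fun=> 0) p q pq vd_in).
  exact: (@is_derive_le0_ge v (fun=> 0) p q pq vd_in).
have vx : v x = v 0.
  by have [x0|x0] := leP x 0; [exact: v_const | apply/esym/v_const => //; exact: ltW].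
have : 0 < v x by rewrite vx /v mulr_gt0 // expR_gt0.
by rewrite /v pmulr_lgt0 // expR_gt0.
Qed.

Lemma ge0_primitive_integrableNy (g F : R -> R) u :
  continuous g -> (forall x, 0 <= g x) -> (forall x, is_derive x 1 F (g x)) ->
  has_lbound (range F) -> mu.-integrable `]-oo, u] (EFin \o g).
Proof.
move=> gc g0 Fd [m Fm].
pose G x := - F (- x).
have Gd x : is_derive x 1 G (g (- x)).
  have := is_deriveN (@is_derive1_comp _ F -%R x _ _ (Fd (- x)) (is_deriveNid x 1)).
  by move/is_derive_eq; apply; rewrite mulrN1 opprK.
have G_nd : {homo G : x y / x <= y}.
  by move=> x y xy; apply: (@is_derive_ge0_le G (fun z => g (- z)) x y xy).
have G_ub : has_ubound (range G).
  by exists (- m) => _ [x _ <-]; rewrite /G lerN2; apply: Fm; exists (- x).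
have Gl := nondecreasing_cvgr G_nd G_ub.
apply/integrableP; split.
  apply/measurable_EFinP.
  exact: measurable_funS (continuous_measurable_fun gc).
rewrite (_ : (fun x => `|(EFin \o g) x|)%E = (fun x => (g x)%:E)); last first.
  by apply/funext => x /=; rewrite ger0_norm.
rewrite -[u]opprK ge0_integration_by_substitutionNy; last 2 first.
- exact: continuous_subspaceT.
- by move=> x _; exact: g0.
rewrite (@ge0_continuous_FTC2y R (g \o -%R) G (- u) _ _ _ Gl) ?ltey //.
- by move=> x _; exact: g0.
- apply: continuous_subspaceT => x.
  by apply: continuous_comp; [exact: continuousN|exact: gc].
- exact/cvg_at_right_filter/(is_derive_continuous (Gd _)).
- by move=> x _; rewrite (is_derive_derive1 (Gd x)).
Qed.

Lemma L2R_measurable f : L2R f -> measurable_fun setT f.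
Proof. by case. Qed.

Lemma L2R_le f g h (k : R) : L2R f -> L2R g -> measurable_fun setT h -> 0 <= k ->
  (forall x, h x ^+ 2 <= k * (f x ^+ 2 + g x ^+ 2)) -> L2R h.
Proof.
move=> [mf fint] [mg gint] mh k0 hle; split => //.
have msq (u : R -> R) :
    measurable_fun setT u -> measurable_fun setT (fun x => (u x ^+ 2)%:E).
  by move=> um; apply/measurable_EFinP/measurable_funX.
have sq0 (u : R -> R) x : setT x -> (0 <= (u x ^+ 2)%:E)%E.
  by rewrite lee_fin sqr_ge0.
apply: (@le_lt_trans _ _ (\int[mu]_x (k%:E * ((f x ^+ 2)%:E + (g x ^+ 2)%:E)))%E).
  apply: ge0_le_integral => //; first exact: sq0.
  - exact: msq.
  - by apply: emeasurable_funM => //; apply: emeasurable_funD; exact: msq.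
  - by move=> x _; rewrite -EFinD -EFinM lee_fin.
rewrite ge0_integralZl_EFin //; last 2 first.
- by move=> x _; rewrite adde_ge0 // ?sq0.
- by apply: emeasurable_funD; exact: msq.
rewrite ge0_integralD //; [|exact: sq0|exact: msq|exact: sq0|exact: msq].
by rewrite lte_mul_pinfty // lte_add_pinfty.
Qed.

Lemma L2RD f g : L2R f -> L2R g -> L2R (fun x => f x + g x).
Proof.
move=> fL gL; apply: (L2R_le (k := 2) fL gL) => //.
  by apply: measurable_funD; exact: L2R_measurable.
move=> x /=; have := sqr_ge0 (f x - g x).
by rewrite !sqrrD !sqrrN; nra.
Qed.

Lemma L2R_mul_bounded c f (M : R) : measurable_fun setT c ->
  (forall x, `|c x| <= M) -> L2R f -> L2R (fun x => c x * f x).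
Proof.
move=> mc cM fL; have M0 : 0 <= M by apply: le_trans (cM 0).
apply: (L2R_le (k := M ^+ 2) fL fL).
- by apply: measurable_funM => //; exact: L2R_measurable.
- exact: sqr_ge0.
move=> x /=.
have : c x ^+ 2 <= M ^+ 2 by rewrite -real_normK ?num_real // lerXn2r // ?nnegrE.
by rewrite exprMn; have := sqr_ge0 (f x); nra.
Qed.

Lemma L2R_integrable_itv f a b : L2R f -> mu.-integrable `[a, b] (EFin \o f).
Proof.
move=> fL.
have mf := measurable_funS measurableT (subsetT `[a, b]) (L2R_measurable fL).
apply: (@le_integrable _ _ _ mu _ _ _ (EFin \o (fun x => 1 + f x ^+ 2))) => //.
- exact/measurable_EFinP.
- move=> x _ /=; rewrite lee_fin [X in _ <= X]ger0_norm ?addr_ge0 ?sqr_ge0 //.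
  have [f1|f1] := leP `|f x| 1; first by rewrite (le_trans f1) // lerDl sqr_ge0.
  have : `|f x| <= `|f x| ^+ 2 by rewrite expr2 ler_peMr // ltW.
  by rewrite real_normK ?num_real //; lra.
- have -> : EFin \o (fun x => 1 + f x ^+ 2) =
      (EFin \o cst 1) \+ (EFin \o (fun x => f x ^+ 2)) by apply/funext.
  apply: integrableD => //.
    by apply: continuous_integrable_itv; exact: cst_continuous.
  apply: integrableS (subsetT _) _ => //; apply/integrableP; split.
    by apply/measurable_EFinP; apply: measurable_funX; exact: L2R_measurable.
  under eq_integral do rewrite /= ger0_norm ?sqr_ge0 //.
  by case: fL.
Qed.

Definition weak_derivR f g :=
  forall a b, a <= b -> f b - f a = \int[mu]_(x in `[a, b]) g x.

Lemma weak_derivR_continuous f g : weak_derivR f g -> L2R g -> continuous f.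
Proof.
move=> fg gL x.
have ax : x - 1 < x by rewrite ltrBlDr ltrDl.
have xb : x < x + 1 by rewrite ltrDl.
have ab := lt_trans ax xb.
pose F y := \int[mu]_(t in `[x - 1, y]) g t.
have Fc : {within `[x - 1, x + 1], continuous F}.
  exact: parameterized_integral_continuous (ltW ab) (L2R_integrable_itv _ _ gL).
have [Fc_in _ _] := (continuous_within_itvP _ ab).1 Fc.
have fE : \forall y \near x, f (x - 1) + F y = f y.
  near=> y; rewrite /F -fg; first by rewrite addrC subrK.
  by apply: ltW; near: y; exact: lt_nbhsr.
apply: cvg_trans (near_eq_cvg fE) _.
rewrite -(nbhs_singleton fE); apply: cvgD; first exact: cvg_cst.
by apply: Fc_in; rewrite in_itv /= ax xb.
Unshelve. all: by end_near.
Qed.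

Lemma weak_derivR_ae f g h : weak_derivR f g ->
  measurable_fun setT g -> measurable_fun setT h ->
  {ae mu, forall x, g x = h x} -> weak_derivR f h.
Proof.
move=> fg mg mh gh a b ab; rewrite fg // /Rintegral; congr fine.
apply: ae_eq_integral => //.
- by apply/measurable_EFinP; exact: measurable_funS mg.
- by apply/measurable_EFinP; exact: measurable_funS mh.
- by apply: ae_filterS gh => t /= -> _.
Qed.

Lemma is_derive_weak_derivR f f' :
  (forall x, is_derive x 1 f (f' x)) -> continuous f' -> weak_derivR f f'.
Proof.
move=> fd f'c a b; rewrite le_eqVlt => /predU1P[<-|ab].
  by rewrite set_itv1 Rintegral_set1 subrr.
have fc x : {for x, continuous f} by exact: is_derive_continuous (fd x).
rewrite /Rintegral (@continuous_FTC2 R f' f a b ab) //.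
- exact: continuous_subspaceT.
- split; first by move=> z _; case: (fd z).
  + exact/cvg_at_right_filter/fc.
  + exact/cvg_at_left_filter/fc.
- by move=> z _; rewrite (is_derive_derive1 (fd z)).
Qed.

Lemma weak_derivR_is_derive f g h : weak_derivR f g -> L2R g ->
  {ae mu, forall x, g x = h x} -> continuous h ->
  forall x, is_derive x 1 f (h x).
Proof.
move=> fg gL gh hc x.
have fh := weak_derivR_ae fg (L2R_measurable gL) (continuous_measurable_fun hc) gh.
have ax : x - 1 < x by rewrite ltrBlDr ltrDl.
have Fd : is_derive x 1 (fun t => f (x - 1) + \int[mu]_(s in `[x - 1, t]) h s) (h x).
  rewrite -[h x]add0r; apply: is_deriveD.
  by apply: is_derive_integral => //= u; exact: continuous_integrable_itv.
apply: near_eq_is_derive Fd; near=> y.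
rewrite -fh; first by rewrite addrC subrK.
by apply: ltW; near: y; exact: lt_nbhsr.
Unshelve. all: by end_near.
Qed.

Lemma weak_derivR_mul (e e' : R -> R) f g h :
  (forall x, is_derive x 1 e (e' x)) -> continuous e' ->
  weak_derivR f g -> L2R g -> {ae mu, forall x, g x = h x} -> continuous h ->
  weak_derivR (fun x => e x * f x) (fun x => e' x * f x + e x * g x).
Proof.
move=> ed e'c fg gL gh hc.
have fd := weak_derivR_is_derive fg gL gh hc.
have ec x : {for x, continuous e} := is_derive_continuous (ed x).
have fc x : {for x, continuous f} := is_derive_continuous (fd x).
have mc (u : R -> R) : continuous u -> measurable_fun setT u :=
  @continuous_measurable_fun _ u.
have efd : weak_derivR (fun x => e x * f x) (fun x => e' x * f x + e x * h x).
  apply: is_derive_weak_derivR => x.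
    apply: is_derive_eq (is_deriveM (ed x) (fd x)) _.
    by rewrite /GRing.scale /= addrC mulrC.
  exact: continuousD (continuousM (e'c x) (fc x)) (continuousM (ec x) (hc x)).
apply: weak_derivR_ae efd _ _ _.
- by apply: measurable_funD; apply: measurable_funM; apply: mc.
- apply: measurable_funD; apply: measurable_funM; try exact: mc.
  exact: L2R_measurable.
- by apply: ae_filterS gh => x /= ->.
Qed.

End real_calculus.

Section complex_functions.
Variable R : realType.
Local Open Scope complex_scope.
Local Notation mu := (@lebesgue_measure R).
Local Notation C := R[i].
Local Notation Re_ f := (fun x => complex.Re (f x)).
Local Notation Im_ f := (fun x => complex.Im (f x)).
Implicit Types (f g h : R -> C) (c e : R -> R).

Lemma complexRe_add (z u : C) : complex.Re (z + u) = complex.Re z + complex.Re u.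
Proof. by case: z; case: u. Qed.

Lemma complexIm_add (z u : C) : complex.Im (z + u) = complex.Im z + complex.Im u.
Proof. by case: z; case: u. Qed.

Lemma complexRe_mul (z u : C) :
  complex.Re (z * u) = complex.Re z * complex.Re u - complex.Im z * complex.Im u.
Proof. by case: z; case: u. Qed.

Lemma complexIm_mul (z u : C) :
  complex.Im (z * u) = complex.Re z * complex.Im u + complex.Im z * complex.Re u.
Proof. by case: z => a b; case: u => c d /=; ring. Qed.

Lemma complexRe_realM (a : R) (z : C) : complex.Re (a%:C * z) = a * complex.Re z.
Proof. by case: z => x y /=; ring. Qed.

Lemma complexIm_realM (a : R) (z : C) : complex.Im (a%:C * z) = a * complex.Im z.
Proof. by case: z => x y /=; ring. Qed.

Definition continuousC f := continuous (Re_ f) /\ continuous (Im_ f).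

Lemma continuousC_add f g :
  continuousC f -> continuousC g -> continuousC (fun x => f x + g x).
Proof.
move=> [fRe fIm] [gRe gIm]; split => x.
  rewrite (funext (fun y => complexRe_add (f y) (g y))).
  exact: continuousD (fRe x) (gRe x).
rewrite (funext (fun y => complexIm_add (f y) (g y))).
exact: continuousD (fIm x) (gIm x).
Qed.

Lemma continuousC_realM c f : continuous c -> continuousC f ->
  continuousC (fun x => (c x)%:C * f x).
Proof.
move=> cc [fRe fIm]; split => x.
  rewrite (funext (fun y => complexRe_realM (c y) (f y))).
  exact: continuousM (cc x) (fRe x).
rewrite (funext (fun y => complexIm_realM (c y) (f y))).
exact: continuousM (cc x) (fIm x).
Qed.

Lemma continuousC_opp f : continuousC f -> continuousC (fun x => - f x).
Proof.
have -> : (fun x => - f x) = (fun x => (-1)%:C * f x).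
  by apply/funext => x; rewrite rmorphN1 mulN1r.
by apply: continuousC_realM => x; exact: cst_continuous.
Qed.

Lemma continuousC_scale (l : C) f : continuousC f -> continuousC (fun x => l * f x).
Proof.
move=> [fRe fIm]; split => x; have lc (r : R) := @cst_continuous R R r x.
  rewrite (funext (fun y => complexRe_mul l (f y))).
  exact: continuousB (continuousM (lc _) (fRe x)) (continuousM (lc _) (fIm x)).
rewrite (funext (fun y => complexIm_mul l (f y))).
exact: continuousD (continuousM (lc _) (fIm x)) (continuousM (lc _) (fRe x)).
Qed.

Lemma L2C_add f g : L2C f -> L2C g -> L2C (fun x => f x + g x).
Proof.
move=> [fRe fIm] [gRe gIm]; split => /=.
  by rewrite (funext (fun y => complexRe_add (f y) (g y))); exact: L2RD.
by rewrite (funext (fun y => complexIm_add (f y) (g y))); exact: L2RD.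
Qed.

Lemma L2C_realM c f (M : R) : continuous c -> (forall x, `|c x| <= M) ->
  L2C f -> L2C (fun x => (c x)%:C * f x).
Proof.
move=> cc cM [fRe fIm]; have mc := continuous_measurable_fun cc.
split.
  rewrite (funext (fun y => complexRe_realM (c y) (f y))).
  exact: L2R_mul_bounded cM fRe.
rewrite (funext (fun y => complexIm_realM (c y) (f y))).
exact: L2R_mul_bounded cM fIm.
Qed.

Lemma weak_derivP f g :
  weak_deriv f g <-> weak_derivR (Re_ f) (Re_ g) /\ weak_derivR (Im_ f) (Im_ g).
Proof.
split => [fg|[fgRe fgIm] a b ab].
  split=> a b ab; have := fg a b ab; rewrite /Cint /=;
    case: (f b) (f a) => ? ? [? ?].
    by move=> /(congr1 (@complex.Re R)).
  by move=> /(congr1 (@complex.Im R)).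
rewrite /Cint -fgRe // -fgIm //.
by case: (f a) => ? ?; case: (f b).
Qed.

Lemma weak_deriv_continuousC f g : weak_deriv f g -> L2C g -> continuousC f.
Proof.
move=> /weak_derivP[fgRe fgIm] [gRe gIm].
by split; [exact: weak_derivR_continuous fgRe gRe|exact: weak_derivR_continuous fgIm gIm].
Qed.

Lemma weak_deriv_realM e (e' : R -> R) f g h :
  (forall x : R, is_derive x 1 e (e' x)) -> continuous e' ->
  weak_deriv f g -> L2C g -> {ae mu, forall x, g x = h x} -> continuousC h ->
  weak_deriv (fun x => (e x)%:C * f x) (fun x => (e' x)%:C * f x + (e x)%:C * g x).
Proof.
move=> ed e'c /weak_derivP[fgRe fgIm] [gRe gIm] gh [hRe hIm].
have ae_part (p : C -> R) : {ae mu, forall x, p (g x) = p (h x)}.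
  by apply: ae_filterS gh => x /= ->.
apply/weak_derivP; split.
  rewrite (funext (fun y => complexRe_realM (e y) (f y))).
  have -> : Re_ (fun y => (e' y)%:C * f y + (e y)%:C * g y) =
      (fun y => e' y * complex.Re (f y) + e y * complex.Re (g y)).
    by apply/funext => y; rewrite complexRe_add !complexRe_realM.
  exact: weak_derivR_mul ed e'c fgRe gRe (ae_part _) hRe.
rewrite (funext (fun y => complexIm_realM (e y) (f y))).
have -> : Im_ (fun y => (e' y)%:C * f y + (e y)%:C * g y) =
    (fun y => e' y * complex.Im (f y) + e y * complex.Im (g y)).
  by apply/funext => y; rewrite complexIm_add !complexIm_realM.
exact: weak_derivR_mul ed e'c fgIm gIm (ae_part _) hIm.
Qed.

Definition weighted (e : R -> R) (B : R -> C * C) (x : R) : C * C :=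
  ((e x)%:C * (B x).1, (e x)%:C * (B x).2).

Definition weighted_deriv (e e' : R -> R) (B dB : R -> C * C) (x : R) : C * C :=
  ((e' x)%:C * (B x).1 + (e x)%:C * (dB x).1,
   (e' x)%:C * (B x).2 + (e x)%:C * (dB x).2).

Lemma weightedK e e1 B x : e x * e1 x = 1 -> weighted e (weighted e1 B) x = B x.
Proof.
by move=> ee1; rewrite /weighted !mulrA -!rmorphM ee1 rmorph1 !mul1r; case: (B x).
Qed.

Lemma weighted_deriv_invK e (a : R -> R) B dB x : e x != 0 ->
  weighted_deriv e (fun y => a y * e y) (weighted (fun y => (e y)^-1) B)
    (weighted_deriv (fun y => (e y)^-1) (fun y => - a y * (e y)^-1) B dB) x = dB x.
Proof.
move=> ex; rewrite /weighted_deriv /weighted /=.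
have eK : (e x)%:C * (e x)^-1%:C = 1 by rewrite -rmorphM divff // rmorph1.
rewrite !(rmorphM, rmorphN) /=.
case: (dB x) => d1 d2 /=; congr pair.
  by rewrite !mulrDr !mulrA eK; ring.
by rewrite !mulrDr !mulrA eK; ring.
Qed.

Lemma weighted_eq0 e B : (forall x, e x != 0) ->
  weighted e B = (fun _ => (0, 0)) <-> B = (fun _ => (0, 0)).
Proof.
move=> e0; split => [eB0|->]; last by apply/funext => x; rewrite /weighted !mulr0.
apply/funext => x; have := congr1 (fun F => F x) eB0; rewrite /weighted /=.
have ex : (e x)%:C != 0 by rewrite fmorph_eq0 e0.
case=> /eqP + /eqP; rewrite !mulf_eq0 (negbTE ex) /= => /eqP B1 /eqP B2.
by case: (B x) B1 B2 => ? ? /= -> ->.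
Qed.

Lemma H1_with_deriv_weighted e (e' : R -> R) (Me Me' : R) (B dB h : R -> C * C) :
  (forall x : R, is_derive x 1 e (e' x)) -> continuous e' ->
  (forall x, `|e x| <= Me) -> (forall x, `|e' x| <= Me') ->
  H1_with_deriv B dB -> {ae mu, forall x, dB x = h x} ->
  continuousC (fun x => (h x).1) -> continuousC (fun x => (h x).2) ->
  H1_with_deriv (weighted e B) (weighted_deriv e e' B dB).
Proof.
move=> ed e'c eM e'M [B1L B2L dB1L dB2L [B1d B2d]] dBh h1c h2c.
have ec : continuous e by move=> x; exact: is_derive_continuous (ed x).
split; rewrite /weighted /weighted_deriv /=.
- exact: L2C_realM eM B1L.
- exact: L2C_realM eM B2L.
- by apply: L2C_add; [exact: L2C_realM e'M B1L|exact: L2C_realM eM dB1L].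
- by apply: L2C_add; [exact: L2C_realM e'M B2L|exact: L2C_realM eM dB2L].
have ae_part (p : C * C -> C) : {ae mu, forall x, p (dB x) = p (h x)}.
  by apply: ae_filterS dBh => x /= ->.
split; first exact: weak_deriv_realM (ae_part fst) h1c.
exact: weak_deriv_realM (ae_part snd) h2c.
Qed.

End complex_functions.

Section kink_profile.
Variable R : realType.
Local Notation mu := (@lebesgue_measure R).
Variables N r0 : R -> R.
Hypothesis hN : nonlinearity N.
Hypothesis hr0 : is_r0 N r0.
Local Notation N' := (derive1 N).
Local Notation N'' := (derive1 (derive1 N)).
Local Notation N0 := (N0 N r0).
Local Notation Np := (Np N r0).
Local Notation K := (Kconst N).

Lemma N_is_derive (s : R) : is_derive s 1 N (N' s).
Proof. by case: hN => Ns _ _ _ _; exact: derivable_is_derive (Ns 0%N s). Qed.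

Lemma derive1N_is_derive (s : R) : is_derive s 1 N' (N'' s).
Proof. by case: hN => Ns _ _ _ _; exact: derivable_is_derive (Ns 1%N s). Qed.

Lemma derive1N_continuous : continuous N'.
Proof. by move=> s; exact: is_derive_continuous (derive1N_is_derive s). Qed.

Lemma derive2N_continuous : continuous N''.
Proof.
case: hN => Ns _ _ _ _ s.
exact: is_derive_continuous (derivable_is_derive (Ns 2%N s)).
Qed.

Lemma N_nonincr s t : 0 <= s <= t -> N t <= N s.
Proof.
move=> /andP[s0 st]; apply: (@is_derive_le0_ge _ N N' s t st) => [z _|z /andP[sz _]].
  exact: N_is_derive.
by case: hN => _ N'lt0 _ _ _; apply/ltW/N'lt0/(le_lt_trans s0 sz).
Qed.

Lemma derive1N_le_neg : exists2 c, 0 < c & forall s, 4^-1 <= s <= 1 -> N' s <= - c.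
Proof.
have q1 : (4^-1 : R) <= 1 by rewrite invf_le1 //; lra.
have [s s_in smax] := EVT_max q1 (continuous_subspaceT derive1N_continuous).
exists (- N' s); last by move=> t t_in; rewrite opprK smax // in_itv.
case: hN => _ N'lt0 _ _ _; rewrite oppr_gt0 N'lt0 //.
by move: s_in; rewrite in_itv /= => /andP[+ _]; apply: lt_le_trans; rewrite invr_gt0.
Qed.

Lemma N_quarter_gt0 : 0 < N 4^-1.
Proof.
have [c c0 N'c] := derive1N_le_neg.
have q1 : (4^-1 : R) <= 1 by rewrite invf_le1 //; lra.
have N'c_in z : 4^-1 < z < 1 -> N' z <= - c.
  by move=> /andP[/ltW z1 /ltW z2]; apply: N'c; rewrite z1 z2.
have := @is_derive_le_diff _ N N' (- c) _ _ q1 (fun z _ => N_is_derive z) N'c_in.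
have : 0 < c * (1 - 4^-1) by rewrite mulr_gt0 // subr_gt0 invf_lt1 //; lra.
by case: hN => _ _ _ -> _; lra.
Qed.

Lemma r0_is_derive (x : R) : is_derive x 1 r0 (r0 x * N0 x).
Proof.
by case: hr0 => r0d _; case: (r0d x) => dx <-; exact: derivable_is_derive.
Qed.

Lemma r0_sq_continuous : continuous (fun x => r0 x ^+ 2).
Proof. by move=> x; exact: is_derive_continuous (is_deriveX 2 (r0_is_derive x)). Qed.

Lemma N0_continuous : continuous N0.
Proof.
move=> x; have := continuous_comp (@r0_sq_continuous x) (is_derive_continuous (N_is_derive _)).
exact.
Qed.

Lemma Np_continuous : continuous Np.
Proof.
move=> x; have := continuousM
  (continuous_comp (@r0_sq_continuous x) (@derive1N_continuous _)) (@r0_sq_continuous x).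
exact.
Qed.

Lemma N0_is_derive (x : R) : is_derive x 1 N0 (2 * Np x * N0 x).
Proof.
have := @is_derive1_comp _ N (fun y => r0 y ^+ 2) x _ _ (N_is_derive _)
  (is_deriveX 2 (r0_is_derive x)).
by move/is_derive_eq; apply; rewrite /Np /GRing.scale /=; ring.
Qed.

Lemma N0_gt0 (x : R) : 0 < N0 x.
Proof.
apply: (@linear_ode_gt0 _ N0 (fun y => 2 * Np y)) => //.
- by move=> y; exact: N0_is_derive.
- move=> y; have := continuousM (@cst_continuous _ _ (2 : R) y) (@Np_continuous y).
  exact.
- by case: hr0 => _ r00; rewrite /N0 r00 expr2 -invfM -natrM; exact: N_quarter_gt0.
Qed.

Lemma r0_gt0 x : 0 < r0 x.
Proof.
apply: (@linear_ode_gt0 _ r0 N0) => [y||].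
- by rewrite mulrC; exact: r0_is_derive.
- exact: N0_continuous.
- by case: hr0 => _ ->; rewrite invr_gt0.
Qed.

Lemma r0_sq_gt0 x : 0 < r0 x ^+ 2.
Proof. by rewrite exprn_gt0 // r0_gt0. Qed.

Lemma r0_sq_lt1 x : r0 x ^+ 2 < 1.
Proof.
rewrite ltNge; apply/negP => r0x1.
have := N0_gt0 x; have := @N_nonincr 1 (r0 x ^+ 2); rewrite ler01 r0x1 /N0.
by case: hN => _ _ _ -> _ /(_ isT); lra.
Qed.

Lemma N0_le1 x : N0 x <= 1.
Proof.
by case: hN => _ _ N01 _ _; rewrite /N0 -[X in _ <= X]N01 N_nonincr // lexx sqr_ge0.
Qed.

Lemma r0_sq_ge_quarter x : 0 <= x -> 4^-1 <= r0 x ^+ 2.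
Proof.
move=> x0.
have r0_nd : r0 0 <= r0 x.
  apply: (is_derive_ge0_le x0 (fun z _ => r0_is_derive z)) => z _.
  by rewrite mulr_ge0 // ltW // ?r0_gt0 ?N0_gt0.
have : 2^-1 ^+ 2 <= r0 x ^+ 2.
  by case: hr0 => _ <-; rewrite lerXn2r // nnegrE ltW // r0_gt0.
by rewrite expr2 -invfM -natrM.
Qed.

Lemma Np_lt0 x : Np x < 0.
Proof.
by case: hN => _ N'lt0 _ _ _; rewrite /Np nmulr_rlt0 ?r0_sq_gt0 // N'lt0 // r0_sq_gt0.
Qed.

Lemma Np_bounded : exists M, forall x, `|Np x| <= M.
Proof.
have [M N'M] := continuous_bounded_itv 0 1 derive1N_continuous.
exists M => x; rewrite /Np normrM [`|r0 x ^+ 2|]ger0_norm ?sqr_ge0 //.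
have s1 : r0 x ^+ 2 <= 1 by exact/ltW/r0_sq_lt1.
by rewrite -[M]mulr1 ler_pM ?sqr_ge0 // N'M // sqr_ge0.
Qed.

Lemma Np_le_neg : exists2 c, 0 < c & forall x, 0 <= x -> Np x <= - c.
Proof.
have [c c0 N'c] := derive1N_le_neg.
exists (c / 4) => [|x x0]; first by rewrite divr_gt0.
have s4 := r0_sq_ge_quarter x0.
have : N' (r0 x ^+ 2) <= - c by apply: N'c; rewrite s4 ltW // r0_sq_lt1.
rewrite /Np => N'le; have s0 := r0_sq_gt0 x.
rewrite -mulNr; nra.
Qed.

Lemma K_add_Np_le_N0 :
  exists2 A, 0 <= A & forall x, 0 <= x -> `|K + Np x| <= A * N0 x.
Proof.
have [c c0 N'c] := derive1N_le_neg.
pose g t := t * N' t; pose g' t := N' t + t * N'' t.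
have gd (t : R) : is_derive t 1 g (g' t).
  apply: is_derive_eq (is_deriveM (is_derive_id t 1) (derive1N_is_derive t)) _.
  by rewrite /g' /GRing.scale /=; ring.
have g'c : continuous g'.
  move=> t; have := continuousD (@derive1N_continuous t)
    (continuousM (@cvg_id _ (nbhs t)) (@derive2N_continuous t)).
  exact.
have [L g'L] := continuous_bounded_itv 4^-1 1 g'c.
have L0 : 0 <= L by apply: le_trans (g'L 1 _); rewrite // lexx invf_le1 //; lra.
exists (L / c) => [|x x0]; first by rewrite divr_ge0 // ltW.
have s4 := r0_sq_ge_quarter x0; have s1 := r0_sq_lt1 x.
set s := r0 x ^+ 2 in s4 s1 *.
have s_in z : s < z < 1 -> 4^-1 <= z <= 1.
  by move=> /andP[sz z1]; apply/andP; split; lra.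
have gs : `|g 1 - g s| <= L * (1 - s).
  rewrite ler_norml; apply/andP; split.
    rewrite -mulNr; apply: (is_derive_ge_diff (ltW s1) (fun z _ => gd z)).
    by move=> z /s_in /g'L; rewrite ler_norml => /andP[].
  apply: (is_derive_le_diff (ltW s1) (fun z _ => gd z)).
  by move=> z /s_in /g'L; rewrite ler_norml => /andP[].
have N0s : c * (1 - s) <= N0 x.
  have := @is_derive_le_diff _ N N' (- c) _ _ (ltW s1) (fun z _ => N_is_derive z).
  case: hN => _ _ _ -> _; rewrite /N0 -/s mulNr sub0r lerN2; apply.
  by move=> z /s_in; exact: N'c.
have -> : K + Np x = - (g 1 - g s) by rewrite /Kconst /Np /g -/s mul1r; ring.
rewrite normrN (le_trans gs) //.
have -> : L * (1 - s) = L / c * (c * (1 - s)) by field; rewrite gt_eqF.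
by rewrite ler_wpM2l // divr_ge0 // ltW.
Qed.

Lemma Np_integrableNy u : mu.-integrable `]-oo, u] (EFin \o Np).
Proof.
pose F x := - (2^-1 * ln (N0 x)).
have Fd (x : R) : is_derive x 1 F (- Np x).
  have := is_deriveN (is_deriveZ 2^-1
    (@is_derive1_comp _ (@ln R) N0 x _ _ (is_derive1_ln (N0_gt0 x)) (N0_is_derive x))).
  move/is_derive_eq; apply; rewrite /GRing.scale /=.
  by field; rewrite gt_eqF // N0_gt0.
have F0 : has_lbound (range F).
  exists 0 => _ [x _ <-]; rewrite /F oppr_ge0 pmulr_rle0 ?invr_gt0 //.
  exact/ln_le0/N0_le1.
have Npint : mu.-integrable `]-oo, u] (EFin \o (fun x => - Np x)).
  apply: ge0_primitive_integrableNy Fd F0 => [x|x].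
    exact: continuousN (@Np_continuous x).
  by rewrite oppr_ge0 ltW // Np_lt0.
apply: eq_integrable (integrableN Npint) => // x _ /=.
by rewrite opprK.
Qed.

End kink_profile.

Section transformation_weight.
Variable R : realType.
Local Notation mu := (@lebesgue_measure R).
Variables N r0 w : R -> R.
Hypothesis hN : nonlinearity N.
Hypothesis hr0 : is_r0 N r0.
Hypothesis hw : is_weight N w.
Local Notation N0 := (N0 N r0).
Local Notation Np := (Np N r0).
Local Notation K := (Kconst N).
Local Notation w' := (derive1 w).
Local Notation I := (fun x => \int[mu]_(y in `]-oo, x]) Np y).
Local Notation E := (transf_weight N r0 w).

Lemma integral_Np_is_derive (x : R) : is_derive x 1 I (Np x).
Proof.
apply: is_derive_integral => [|u|]; first exact: Np_continuous hN hr0.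
  exact: Np_integrableNy.
exact: ltNyr.
Qed.

Lemma integral_Np_le0 x : I x <= 0.
Proof.
have Np_int := Np_integrableNy hN hr0 x.
have : 0 <= \int[mu]_(y in `]-oo, x]) (-1 * Np y).
  by apply: Rintegral_ge0 => // y _; rewrite mulN1r oppr_ge0 ltW // Np_lt0.
by rewrite RintegralZl // mulN1r oppr_ge0.
Qed.

Lemma integral_Np_nonincr x y : x <= y -> I y <= I x.
Proof.
move=> xy; apply: (is_derive_le0_ge xy (fun z _ => integral_Np_is_derive z)) => z _.
by rewrite ltW // Np_lt0.
Qed.

Lemma w_is_derive (x : R) : is_derive x 1 w (w' x).
Proof. by case: hw => [[wd _] _ _]; exact: derivable_is_derive. Qed.

Lemma derive1w_continuous : continuous w'.
Proof. by case: hw => [[_ w'c] _ _]. Qed.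

Lemma derive1w_bounded : exists M, forall x, `|w' x| <= M.
Proof.
have [M w'M] := continuous_bounded_itv (-1) 1 derive1w_continuous.
exists (Num.max M `|K|) => x; rewrite le_max.
have [x1|x1] := ltP x (-1).
  have wE : \forall t \near x, w t = cst 0 t.
    near=> t; case: hw => _ w0 _; rewrite w0 //; apply: ltW; near: t; exact: lt_nbhsl.
  by rewrite derive1E (near_eq_derive _ wE) derive_val normr0 normr_ge0 orbT.
have [x2|x2] := ltP 1 x; last by rewrite w'M ?x1.
have wE : \forall t \near x, w t = K * t.
  near=> t; case: hw => _ _ wK; rewrite wK //; apply: ltW; near: t; exact: lt_nbhsr.
have Kd : is_derive x 1 (fun t => K * t) K.
  by apply: is_derive_eq (is_deriveZ K (is_derive_id x 1)) _; rewrite /GRing.scale /= mulr1.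
by rewrite derive1E (near_eq_derive _ wE) derive_val lexx orbT.
Unshelve. all: by end_near.
Qed.

Lemma Kx_add_integral_Np_bounded :
  exists k, forall x, 0 <= x -> `|K * x + I x - I 0| <= k.
Proof.
have [A A0 KNp] := K_add_Np_le_N0 hN hr0.
have [c c0 Npc] := Np_le_neg hN hr0.
pose k := A / c.
have k0 : 0 <= k by rewrite divr_ge0 // ltW.
have NpN0 t : 0 <= t -> k * (Np t * N0 t) <= - (A * N0 t).
  move=> t0; have N0t := N0_gt0 hN hr0 t.
  have : Np t * N0 t <= - c * N0 t by rewrite ler_wpM2r ?Npc // ltW.
  move/(ler_wpM2l k0); rewrite /k.
  by have -> : A / c * (- c * N0 t) = - (A * N0 t) by field; rewrite gt_eqF.
(* The correction [+- k N0 / 2] absorbs [K + Np = O (N0)]. *)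
have Phid (s t : R) : is_derive t 1 (fun t => K * t + I t + s / 2 * N0 t)
    (K + Np t + s * (Np t * N0 t)).
  have := is_deriveD (is_deriveD (is_deriveZ K (is_derive_id t 1))
    (integral_Np_is_derive t)) (is_deriveZ (s / 2) (N0_is_derive hN hr0 t)).
  by move/is_derive_eq; apply; rewrite /GRing.scale /=; field.
exists (k / 2) => x x0.
have Phi_nincr : K * x + I x + k / 2 * N0 x <= K * 0 + I 0 + k / 2 * N0 0.
  apply: (is_derive_le0_ge x0 (fun t _ => Phid k t)) => t /andP[/ltW t0 _].
  have := NpN0 t t0; have := KNp t t0; rewrite ler_norml => /andP[_]; lra.
have Phi_ndecr : K * 0 + I 0 + - k / 2 * N0 0 <= K * x + I x + - k / 2 * N0 x.
  apply: (is_derive_ge0_le x0 (fun t _ => Phid (- k) t)) => t /andP[/ltW t0 _].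
  have := NpN0 t t0; have := KNp t t0; rewrite ler_norml => /andP[+ _].
  rewrite mulNr; lra.
have kN0 t : 0 <= k / 2 * N0 t <= k / 2.
  have k20 : 0 <= k / 2 by rewrite divr_ge0.
  by rewrite mulr_ge0 ?(ltW (N0_gt0 hN hr0 t)) //= ler_piMr // (N0_le1 r0 hN).
have kN0x := kN0 x; have kN00 := kN0 0.
move: Phi_nincr Phi_ndecr kN0x kN00; rewrite !mulNr mulr0 ler_norml.
by move=> ? ? /andP[? ?] /andP[? ?]; apply/andP; split; lra.
Qed.

Lemma w_add_integral_Np_bounded : exists lo hi, forall x, lo <= w x + I x <= hi.
Proof.
have [k kK] := Kx_add_integral_Np_bounded.
have wIc : continuous (fun x => w x + I x).
  move=> x; exact: continuousD (is_derive_continuous (w_is_derive x))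
    (is_derive_continuous (integral_Np_is_derive x)).
have [M wIM] := continuous_bounded_itv (-1) 1 wIc.
pose lo : R := Num.min (I (-1)) (Num.min (- M) (I 0 - k)).
pose hi : R := Num.max 0 (Num.max M (I 0 + k)).
have [lo1 lo2 lo3] : [/\ lo <= I (-1), lo <= - M & lo <= I 0 - k].
  by rewrite !ge_min !lexx !orbT.
have [hi1 hi2 hi3] : [/\ 0 <= hi, M <= hi & I 0 + k <= hi].
  by rewrite !le_max !lexx !orbT.
clearbody lo hi; exists lo, hi => x.
have [x1|x1] := leP x (-1).
  case: hw => _ w0 _; rewrite w0 // add0r.
  by rewrite (le_trans lo1 (integral_Np_nonincr x1)) (le_trans (integral_Np_le0 x) hi1).
have [x2|x2] := leP x 1.
  have := wIM x; rewrite ltW //= x2 ler_norml => /(_ isT) /andP[Mx xM].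
  by rewrite (le_trans lo2 Mx) (le_trans xM hi2).
case: hw => _ _ wK; rewrite wK; last exact: ltW.
have := kK x; rewrite ler_norml => /(_ (ltW (lt_trans ltr01 x2))) /andP[kx xk].
rewrite (le_trans lo3 _) ?(le_trans _ hi3) //; first by rewrite -lerBlDl.
by rewrite lerBlDr -lerBlDl -opprB -lerNl.
Qed.

Lemma transf_weight_is_derive (x : R) : is_derive x 1 E ((w' x + Np x) * E x).
Proof.
have := is_derive1_comp (is_derive_expR _)
  (is_deriveD (w_is_derive x) (integral_Np_is_derive x)).
by rewrite mulrC.
Qed.

Lemma transf_weight_neq0 x : E x != 0.
Proof. exact/lt0r_neq0/expR_gt0. Qed.

Lemma transf_weight_inv_is_derive (x : R) :
  is_derive x 1 (fun y => (E y)^-1) (- (w' x + Np x) * (E x)^-1).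
Proof.
have := is_deriveV (transf_weight_neq0 x) (transf_weight_is_derive x).
move/is_derive_eq; apply; rewrite /GRing.scale /=.
by field; exact: transf_weight_neq0.
Qed.

Lemma transf_weight_bounds : exists lo hi, 0 < lo /\ forall x, lo <= E x <= hi.
Proof.
have [lo [hi wI]] := w_add_integral_Np_bounded.
exists (expR lo), (expR hi); split => [|x]; first exact: expR_gt0.
by rewrite /transf_weight !ler_expR.
Qed.

Lemma weight_logderiv_continuous : continuous (fun x => w' x + Np x).
Proof.
move=> x; have := continuousD (@derive1w_continuous x) (@Np_continuous _ _ _ hN hr0 x).
exact.
Qed.

Lemma weight_logderiv_bounded : exists M, forall x, `|w' x + Np x| <= M.
Proof.
have [M1 w'M] := derive1w_bounded; have [M2 NpM] := Np_bounded hN hr0.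
by exists (M1 + M2) => x; rewrite (le_trans (ler_normD _ _)) // lerD.
Qed.

End transformation_weight.

Local Open Scope complex_scope.

Definition kink_ode_rhs (R : realType) (N r0 : R -> R) (lam : R[i])
    (B : R -> R[i] * R[i]) (x : R) : R[i] * R[i] :=
  ((N0 N r0 x + Np N r0 x)%:C * (B x).1 + lam * (B x).2,
   lam * (B x).1 - (N0 N r0 x + Np N r0 x)%:C * (B x).2).

Section linearized_operator.
Variable R : realType.
Local Notation C := R[i].
Implicit Types (N w e : R -> R) (B dB : R -> C * C).

Lemma Lstar_weighted_eigenE N (r0 : R -> R) w e (lam : C) (Bt dBt : R -> C * C)
    B dB x : e x != 0 ->
  Bt x = weighted e B x ->
  dBt x = weighted_deriv e (fun y => (derive1 w y + Np N r0 y) * e y) B dB x ->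
  Lstar N r0 w Bt dBt x = (lam * (Bt x).1, lam * (Bt x).2) <->
  dB x = kink_ode_rhs N r0 lam B x.
Proof.
move=> ex BtE dBtE; have eC : (e x)%:C != 0 by rewrite fmorph_eq0.
rewrite /Lstar /kink_ode_rhs BtE dBtE /weighted /weighted_deriv /=.
case: (B x) (dB x) => b1 b2 [d1 d2] /=.
move: (derive1 w x) (N0 N r0 x) (Np N r0 x) => a n0 np.
rewrite !(rmorphD, rmorphN, rmorphM, rmorphB) /=.
rewrite [X in (X, _) = _ <-> _](_ : _ = (e x)%:C * (d2 + (n0 + np)%:C * b2)); last first.
  by rewrite rmorphD; ring.
rewrite [X in (_, X) = _ <-> _](_ : _ = (e x)%:C * (d1 - (n0 + np)%:C * b1)); last first.
  by rewrite rmorphD; ring.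
rewrite !(mulrCA lam (e x)%:C); split => [[/(mulfI eC) e2 /(mulfI eC) e1]|[-> ->]].
  by congr pair; [rewrite -e1|rewrite -e2]; ring.
by congr pair; congr (_ * _); ring.
Qed.

Lemma Lstar_eigen_deriv N (r0 : R -> R) w (lam : C) (Bt dBt : R -> C * C) x :
  Lstar N r0 w Bt dBt x = (lam * (Bt x).1, lam * (Bt x).2) ->
  dBt x = (lam * (Bt x).2 + (derive1 w x + N0 N r0 x + 2 * Np N r0 x)%:C * (Bt x).1,
           lam * (Bt x).1 + (derive1 w x - N0 N r0 x)%:C * (Bt x).2).
Proof.
rewrite /Lstar; case: (Bt x) (dBt x) => b1 b2 [d1 d2] /= [e2 e1].
rewrite -e1 -e2 !(rmorphD, rmorphN, rmorphM, rmorphB) /=.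
by congr pair; ring.
Qed.

End linearized_operator.

Section eigenfunction_transformation.
Variable R : realType.
Local Notation C := R[i].
Variables N r0 w : R -> R.
Hypothesis hN : nonlinearity N.
Hypothesis hr0 : is_r0 N r0.
Hypothesis hw : is_weight N w.
Variable lam : C.
Local Notation E := (transf_weight N r0 w).
Local Notation G := (fun x => (E x)^-1).
Local Notation a := (fun x => derive1 w x + Np N r0 x).

Let E_neq0 x : E x != 0 := transf_weight_neq0 N r0 w x.

Lemma eigenfunction_weighted B :
  solves_ODE N r0 lam B -> is_eigenfunction N r0 w lam (weighted E B).
Proof.
case=> dB [BH dBE]; case: (BH) => _ _ dB1L dB2L [B1d B2d].
have [lo [hi [_ Ebd]]] := transf_weight_bounds hN hr0 hw.
have [M aM] := weight_logderiv_bounded hN hr0 hw.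
have Ed := transf_weight_is_derive hN hr0 hw.
have E_le x : `|E x| <= hi by rewrite gtr0_norm ?expR_gt0 //; case/andP: (Ebd x).
have [B1c B2c] := (weak_deriv_continuousC B1d dB1L, weak_deriv_continuousC B2d dB2L).
have mc : continuous (fun x => N0 N r0 x + Np N r0 x).
  move=> x; have := continuousD (@N0_continuous _ _ _ hN hr0 x) (@Np_continuous _ _ _ hN hr0 x).
  exact.
exists (weighted_deriv E (fun x => a x * E x) B dB); split.
  apply: (H1_with_deriv_weighted (Me := hi) (Me' := M * hi) Ed _ E_le _ BH dBE).
  - move=> x; have := continuousM (@weight_logderiv_continuous _ _ _ _ hN hr0 hw x)
      (is_derive_continuous (Ed x)).
    exact.
  - by move=> x; rewrite normrM ler_pM.
  - exact: continuousC_add (continuousC_realM mc B1c) (continuousC_scale lam B2c).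
  - exact: continuousC_add (continuousC_scale lam B1c)
      (continuousC_opp (continuousC_realM mc B2c)).
apply: ae_filterS dBE => x dBx.
exact/(Lstar_weighted_eigenE lam (E_neq0 x) erefl erefl).
Qed.

Lemma weighted_inv_solves_ODE Bt :
  is_eigenfunction N r0 w lam Bt -> solves_ODE N r0 lam (weighted G Bt).
Proof.
case=> dBt [BtH eig]; case: (BtH) => _ _ dB1L dB2L [B1d B2d].
have [lo [hi [lo0 Ebd]]] := transf_weight_bounds hN hr0 hw.
have [M aM] := weight_logderiv_bounded hN hr0 hw.
have Gd := transf_weight_inv_is_derive hN hr0 hw.
have G_le x : `|G x| <= lo^-1.
  rewrite gtr0_norm ?invr_gt0 ?expR_gt0 // lef_pV2 ?posrE ?expR_gt0 //.
  by case/andP: (Ebd x).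
have [B1c B2c] := (weak_deriv_continuousC B1d dB1L, weak_deriv_continuousC B2d dB2L).
have w'c := derive1w_continuous hw.
have N0c := N0_continuous hN hr0; have Npc := Np_continuous hN hr0.
pose h x := (lam * (Bt x).2 + (derive1 w x + N0 N r0 x + 2 * Np N r0 x)%:C * (Bt x).1,
             lam * (Bt x).1 + (derive1 w x - N0 N r0 x)%:C * (Bt x).2).
exists (weighted_deriv G (fun x => - a x * G x) Bt dBt); split.
  apply: (H1_with_deriv_weighted (Me := lo^-1) (Me' := M * lo^-1) (h := h) Gd _ G_le _ BtH).
  - move=> x; have := continuousM
      (continuousN (@weight_logderiv_continuous _ _ _ _ hN hr0 hw x))
      (is_derive_continuous (Gd x)).
    exact.
  - by move=> x; rewrite normrM normrN ler_pM.
  - by apply: ae_filterS eig => x; exact: Lstar_eigen_deriv.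
  - apply: continuousC_add (continuousC_scale lam B2c) (continuousC_realM _ B1c) => x.
    have := continuousD (continuousD (w'c x) (N0c x))
      (continuousM (@cst_continuous _ _ (2 : R) x) (Npc x)).
    exact.
  - apply: continuousC_add (continuousC_scale lam B1c) (continuousC_realM _ B2c) => x.
    by have := continuousB (w'c x) (N0c x); exact.
apply: ae_filterS eig => x eigx.
have BtE : Bt x = weighted E (weighted G Bt) x by rewrite weightedK ?divff.
have dBtE : dBt x = weighted_deriv E (fun y => a y * E y) (weighted G Bt)
    (weighted_deriv G (fun y => - a y * G y) Bt dBt) x.
  by rewrite weighted_deriv_invK.
exact: (Lstar_weighted_eigenE lam (E_neq0 x) BtE dBtE).1 eigx.
Qed.

Lemma eigenfunction_iff_solves_ODE Bt B : (forall x, Bt x = weighted E B x) ->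
  (Bt <> (fun _ => (0, 0)) /\ is_eigenfunction N r0 w lam Bt <->
   B <> (fun _ => (0, 0)) /\ solves_ODE N r0 lam B).
Proof.
move=> /funext ->.
split=> [[nz eig]|[nz ode]]; split.
- by move=> B0; apply: nz; apply/(weighted_eq0 B E_neq0).
- have -> : B = weighted G (weighted E B).
    by apply/funext => x; rewrite weightedK // mulVf.
  exact: weighted_inv_solves_ODE.
- by move=> /(weighted_eq0 B E_neq0).
- exact: eigenfunction_weighted.
Qed.

End eigenfunction_transformation.

Theorem corollary8p4 (R : realType) (N r0 w : R -> R)
  (hN : nonlinearity N) (hK : 0 < Kconst N)
  (hr0 : is_r0 N r0) (hw : is_weight N w) (lam : R[i]) :
  ((exists Bt : R -> R[i] * R[i],
       Bt <> (fun _ => (0, 0)) /\ is_eigenfunction N r0 w lam Bt)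
   <->
   (exists B : R -> R[i] * R[i],
       B <> (fun _ => (0, 0)) /\ solves_ODE N r0 lam B))
  /\
  (forall Bt B : R -> R[i] * R[i],
     (forall x : R, Bt x = ((transf_weight N r0 w x)%:C * (B x).1,
                            (transf_weight N r0 w x)%:C * (B x).2)) ->
     ((Bt <> (fun _ => (0, 0)) /\ is_eigenfunction N r0 w lam Bt)
      <->
      (B <> (fun _ => (0, 0)) /\ solves_ODE N r0 lam B))).
Proof.
have transfer := eigenfunction_iff_solves_ODE hN hr0 hw lam.
split=> //; split=> [[Bt eig]|[B ode]].
- exists (weighted (fun x => (transf_weight N r0 w x)^-1) Bt).
  apply/(transfer Bt) => // x.
  by rewrite weightedK // divff // transf_weight_neq0.
- by exists (weighted (transf_weight N r0 w) B); apply/(transfer _ B).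
Qed.
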